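(* Let $\mathcal G=(\mathcal V,\mathcal E,W)$ be a network, $h\in\mathbb{R}^{\mathcal V}$, and consider the SNC game with binary actions on $\mathcal G$ with external field $h$, with set of Nash equilibria $\mathcal N$. Let $\mathcal V=\mathcal R\cup\mathcal S$, $\mathcal R\cap\mathcal S=\emptyset$, be a binary partition such that $\mathcal G_{\mathcal R}$ is unsigned. Assume there exists $a\in\{\pm1\}$ such that $$w_i^{\mathcal R}+ah_i\ge w_i^{\mathcal S}\qquad\forall i\in\mathcal R,$$ and $\mathcal N_{\mathcal S}^{(a\mathbf 1)}\neq\emptyset$. Then there exists a Nash equilibrium $x^*\in\mathcal N$ with $x^*_{\mathcal R}=a\mathbf 1$.
   Context: A network is a triple $\mathcal G=(\mathcal V,\mathcal E,W)$ where $\mathcal V$ is a finite nonempty set, $\mathcal E\subseteq\mathcal V\times\mathcal V$, and $W\in\mathbb{R}^{\mathcal V\times\mathcal V}$ has zero diagonal and satisfies $W_{ij}\neq0$ iff $(i,j)\in\mathcal E$ (weights may have either sign). It is unsigned if $W\ge0$ entrywise. For $\mathcal U\subseteq\mathcal V$, the subnetwork $\mathcal G_{\mathcal U}$ has node set $\mathcal U$, links $\mathcal E\cap(\mathcal U\times\mathcal U)$ and weight matrix $W_{\mathcal U\mathcal U}$. For $i\in\mathcal V$ and $\mathcal B\subseteq\mathcal V$, $w_i^{\mathcal B}=\sum_{j\in\mathcal B}|W_{ij}|$. $\mathbf 1$ is the all-ones vector. The SNC game with binary actions on $\mathcal G$ with external field $h\in\mathbb{R}^{\mathcal V}$ has player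 set $\mathcal V$, action set $\{-1,+1\}$ for each player, strategy profiles $\mathcal X=\{\pm1\}^{\mathcal V}$, and utilities $u_i(x)=h_ix_i+x_i\sum_{j\in\mathcal V}W_{ij}x_j$. Best responses $\mathcal B_i(x_{-i})=\arg\max_{x_i\in\{\pm1\}}u_i(x_i,x_{-i})$; Nash equilibrium: $x^*_i\in\mathcal B_i(x^*_{-i})$ for all $i$. Profiles are written $x=(x_{\mathcal R},x_{\mathcal S})$. For $y\in\{\pm1\}^{\mathcal R}$, the $\mathcal S$-restricted game with strategy profile of players in $\mathcal R$ frozen to $y$ has player set $\mathcal S$, actions $\{\pm1\}$, and utilities $u_i^{(y)}(z)=u_i(y,z)$ for $i\in\mathcal S$, $z\in\{\pm1\}^{\mathcal S}$; $\mathcal N_{\mathcal S}^{(y)}$ is its set of Nash equilibria. *)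

From mathcomp Require Import all_boot all_order all_algebra.
Set Implicit Arguments. Unset Strict Implicit. Unset Printing Implicit Defensive.
Import Order.TTheory GRing.Theory Num.Theory.
Local Open Scope ring_scope.

(* A network on a finite nonempty node set V: weight matrix W with zero
   diagonal; the link set is E = {(i,j) | W i j != 0}, so it is determined by W. *)
Definition network (R : numDomainType) (V : finType) (W : V -> V -> R) : Prop :=
  (0 < #|V|)%N /\ forall i, W i i = 0.

Definition link_set (R : numDomainType) (V : finType) (W : V -> V -> R) : {set V * V} :=
  [set e | W e.1 e.2 != 0].

Definition unsigned_on (R : numDomainType) (V : finType) (W : V -> V -> R) (U : {set V}) : Prop :=
  forall i j, i \in U -> j \in U -> 0 <= W i j.

Definition wB (R : numDomainType) (V : finType) (W : V -> V -> R) (i : V) (B : {set V}) : R :=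
  \sum_(j in B) `|W i j|.

Definition pm1 (R : numDomainType) (b : R) : Prop := b = 1 \/ b = -1.
Definition profile (R : numDomainType) (V : finType) (x : V -> R) : Prop :=
  forall i, pm1 (x i).

Definition upd (R : numDomainType) (V : finType) (x : V -> R) (i : V) (b : R) : V -> R :=
  fun j => if j == i then b else x j.

Definition util (R : numDomainType) (V : finType) (W : V -> V -> R) (h : V -> R)
    (i : V) (x : V -> R) : R :=
  h i * x i + x i * \sum_(j : V) W i j * x j.

Definition best_resp (R : numDomainType) (V : finType) (W : V -> V -> R) (h : V -> R)
    (i : V) (x : V -> R) : Prop :=
  forall b, pm1 b -> util W h i (upd x i b) <= util W h i x.

Definition nash (R : numDomainType) (V : finType) (W : V -> V -> R) (h : V -> R)
    (x : V -> R) : Prop :=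
  profile x /\ forall i, best_resp W h i x.

Definition join_prof (R : numDomainType) (V : finType) (Rs : {set V}) (y z : V -> R) : V -> R :=
  fun j => if j \in Rs then y j else z j.

(* z (only its values on S = ~: Rs matter) is a Nash equilibrium of the
   S-restricted game with players in Rs frozen to y : members of N_S^(y). *)
Definition restricted_nash (R : numDomainType) (V : finType) (W : V -> V -> R) (h : V -> R)
    (Rs : {set V}) (y z : V -> R) : Prop :=
  (forall i, i \in ~: Rs -> pm1 (z i)) /\
  forall i, i \in ~: Rs -> best_resp W h i (join_prof Rs y z).

(* Fix the players of R at a and the players of S at an equilibrium of the
   restricted game; only the players of R can want to deviate.  Writing
   f_i = h_i + sum_j W_ij x_j for the local field, player i is happy iff
   x_i f_i >= 0.  For i in R the links inside R are nonnegative, so they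
   contribute exactly w_i^R to a f_i, while the links to S contribute at
   least -w_i^S; hence a f_i >= w_i^R + a h_i - w_i^S >= 0. *)
From mathcomp Require Import all_boot all_order all_algebra.
Set Implicit Arguments. Unset Strict Implicit. Unset Printing Implicit Defensive.
Import Order.TTheory GRing.Theory Num.Theory.
Local Open Scope ring_scope.

Section SNCGame.

Variables (R : realFieldType) (V : finType) (W : V -> V -> R) (h : V -> R).

Lemma pm1_norm (b : R) : pm1 b -> `|b| = 1.
Proof. by case=> ->; rewrite ?normrN normr1. Qed.

Lemma pm1_mulss (b : R) : pm1 b -> b * b = 1.
Proof. by case=> ->; rewrite ?mulrNN mulr1. Qed.

Definition local_field (i : V) (x : V -> R) : R := h i + \sum_j W i j * x j.

Lemma utilE i x : util W h i x = x i * local_field i x.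
Proof. by rewrite /util /local_field mulrDr mulrC. Qed.

Lemma local_field_upd i x b : W i i = 0 -> local_field i (upd x i b) = local_field i x.
Proof.
move=> Wii; congr (_ + _); apply: eq_bigr => j _; rewrite /upd.
by case: eqP => [->|//]; rewrite Wii !mul0r.
Qed.

Lemma best_resp_field_ge0 i x :
  W i i = 0 -> `|x i| = 1 -> 0 <= x i * local_field i x -> best_resp W h i x.
Proof.
move=> Wii xi1 aligned b /pm1_norm b1.
rewrite !utilE local_field_upd // /upd eqxx.
have -> : x i * local_field i x = `|local_field i x|.
  by rewrite -[LHS]ger0_norm // normrM xi1 mul1r.
by rewrite (le_trans (ler_norm _)) // normrM b1 mul1r.
Qed.

Lemma wB_sub_le_mul_sum (Rs : {set V}) (a : R) i (x : V -> R) :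
  unsigned_on W Rs -> pm1 a -> i \in Rs ->
  (forall j, j \in Rs -> x j = a) -> (forall j, j \notin Rs -> `|x j| <= 1) ->
  wB W i Rs - wB W i (~: Rs) <= a * \sum_j W i j * x j.
Proof.
move=> Wge0 a_pm1 iR xR xS; rewrite mulr_sumr (bigID (mem Rs)) /= /wB.
apply: lerD.
  apply: ler_sum => j jR; rewrite xR // mulrCA pm1_mulss // mulr1.
  by rewrite ger0_norm // Wge0.
rewrite -sumrN [X in X <= _](eq_bigl (fun j => j \notin Rs)) => [|j]; last by rewrite in_setC.
apply: ler_sum => j jS; rewrite lerNl (le_trans (ler_norm _)) //.
rewrite normrN mulrCA normrM normrM (pm1_norm a_pm1) mul1r.
exact: ler_piMr (normr_ge0 _) (xS j jS).
Qed.

End SNCGame.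

Theorem proposition4 (R : realFieldType) (V : finType) (W : V -> V -> R) (h : V -> R)
    (Rs : {set V}) (a : R) :
  network W ->
  unsigned_on W Rs ->
  pm1 a ->
  (forall i, i \in Rs -> wB W i (~: Rs) <= wB W i Rs + a * h i) ->
  (exists z : V -> R, restricted_nash W h Rs (fun _ => a) z) ->
  exists x : V -> R, nash W h x /\ (forall i, i \in Rs -> x i = a).
Proof.
move=> [_ Wii] Wge0 a_pm1 weights_ge [z [z_pm1 z_best]].
set x := join_prof Rs (fun _ => a) z.
have xR j : j \in Rs -> x j = a by rewrite /x /join_prof => ->.
have xS j : j \notin Rs -> x j = z j by rewrite /x /join_prof => /negbTE ->.
have x_pm1 : profile x.
  move=> j; case: (boolP (j \in Rs)) => [/xR -> // | jS].
  by rewrite xS //; apply: z_pm1; rewrite inE.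
exists x; split=> //; split=> // i.
case: (boolP (i \in Rs)) => [iR | iS]; last by apply: z_best; rewrite inE.
have x_norm_le1 j : j \notin Rs -> `|x j| <= 1 by rewrite pm1_norm.
apply: best_resp_field_ge0; rewrite ?pm1_norm // xR // mulrDr addrC.
have field_lb := wB_sub_le_mul_sum Wge0 a_pm1 iR xR x_norm_le1.
apply: le_trans (lerD field_lb (lexx (a * h i))).
by rewrite addrAC subr_ge0 weights_ge.
Qed.
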